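(* Let $l,m,N$ be positive integers with $m>l\ge 5$, let $\boldsymbol\sigma\in\mathrm{ir}(l)$, and let $B_1,\dots,B_N\in\Sigma_q^m$. If $\boldsymbol\sigma B_i\boldsymbol\sigma\in\mathrm{ir}(m+2l)$ for all $i\in[N]$, then $B_1\boldsymbol\sigma B_2\boldsymbol\sigma\cdots\boldsymbol\sigma B_N\in\mathrm{ir}(N(m+l)-l)$.
   Context: $\Sigma_q=\{0,\dots,q-1\}$, $q\ge3$; $[N]=\{1,\dots,N\}$. A string is irreducible if it has no substring of the form $\mathbf{a}\mathbf{a}$ with $1\le|\mathbf{a}|\le3$; $\mathrm{ir}(n)$ is the set of irreducible strings of length $n$ over $\Sigma_q$. *)

From mathcomp Require Import all_boot.
Set Implicit Arguments. Unset Strict Implicit. Unset Printing Implicit Defensive.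

(* Strings over Sigma_q = {0,...,q-1} are sequences of elements of 'I_q. *)

(* s contains a square a a with 1 <= |a| <= 3 as a (contiguous) substring *)
Definition has_short_square (T : eqType) (s : seq T) : bool :=
  [exists k : 'I_4, [exists i : 'I_(size s).+1,
     (0 < k) && (i + 2 * k <= size s) &&
     (take k (drop i s) == take k (drop (i + k) s))]].

Definition irreducible (T : eqType) (s : seq T) : bool := ~~ has_short_square s.

Definition ir (q n : nat) (s : seq 'I_q) : bool := (size s == n) && irreducible s.

(* B_1 sigma B_2 sigma ... sigma B_N for Bs = [:: B_1; ...; B_N] *)
Fixpoint join_with (T : Type) (sep : seq T) (Bs : seq (seq T)) : seq T :=
  match Bs with
  | [::] => [::]
  | [:: B] => B
  | B :: Bs' => B ++ sep ++ join_with sep Bs'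
  end.

From mathcomp Require Import all_boot.
From mathcomp Require Import zify.

Set Implicit Arguments.
Unset Strict Implicit.
Unset Printing Implicit Defensive.

(* Two facts about such squares give the theorem:
   - being square-free is inherited by every factor (a square of s is also a
     square of a ++ s ++ c);
   - if a ++ o and o ++ c are both irreducible and |o| >= 5, then so is
     a ++ o ++ c: a square has length 2k <= 6, so it cannot start in a and end
     in c, hence it lies inside a ++ o or inside o ++ c.
   By induction on the number of blocks, the second fact glues the irreducible
   words sigma B_i sigma along their common sigma into the irreducible word
   sigma B_1 sigma ... sigma B_N sigma; by the first fact its factor
   B_1 sigma ... sigma B_N is irreducible, and its length is a direct count. *)

Section ShortSquares.
Variable T : eqType.

Definition factor (s : seq T) (i k : nat) : seq T := take k (drop i s).

Lemma short_squareP (s : seq T) :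
  reflect (exists k i, [/\ 0 < k < 4, i + 2 * k <= size s &
                           factor s i k = factor s (i + k) k])
          (has_short_square s).
Proof.
apply: (iffP existsP) => [[k /existsP[i /andP[/andP[k_gt0 fits] /eqP sq]]]|].
  by exists k, i; rewrite k_gt0 ltn_ord.
move=> [k [i [/andP[k_gt0 k_lt4] fits sq]]]; exists (Ordinal k_lt4).
have i_le : i < (size s).+1 by lia.
by apply/existsP; exists (Ordinal i_le); rewrite /= k_gt0 fits; apply/eqP.
Qed.

Lemma factor_catl (s c : seq T) (i k : nat) : i + k <= size s ->
  factor (s ++ c) i k = factor s i k.
Proof.
move=> fits; rewrite /factor drop_cat.
case: ltnP => [_|le_si]; first by rewrite takel_cat // size_drop; lia.
have -> : k = 0 by lia.
by rewrite !take0.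
Qed.

Lemma factor_catr (a s : seq T) (i k : nat) :
  factor (a ++ s) (size a + i) k = factor s i k.
Proof. by rewrite /factor addnC -drop_drop drop_size_cat. Qed.

Lemma short_square_catl (s c : seq T) :
  has_short_square s -> has_short_square (s ++ c).
Proof.
move=> /short_squareP[k [i [k_range fits sq]]]; apply/short_squareP.
have fits_k : i + k <= size s by lia.
have fits_2k : i + k + k <= size s by lia.
by exists k, i; rewrite size_cat !factor_catl //; split=> //; lia.
Qed.

Lemma short_square_catr (a s : seq T) :
  has_short_square s -> has_short_square (a ++ s).
Proof.
move=> /short_squareP[k [i [k_range fits sq]]]; apply/short_squareP.
exists k, (size a + i); rewrite -[size a + i + k]addnA !factor_catr size_cat.
by split=> //; lia.
Qed.

Lemma irreducible_infix (a s c : seq T) :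
  irreducible (a ++ s ++ c) -> irreducible s.
Proof.
by apply: contra => sq; apply/short_square_catr/short_square_catl.
Qed.

Lemma irreducible_glue (a o c : seq T) : 5 <= size o ->
  irreducible (a ++ o) -> irreducible (o ++ c) -> irreducible (a ++ o ++ c).
Proof.
move=> o_ge5 /negP irr_ao /negP irr_oc; apply/negP.
move=> /short_squareP[k [i [k_range fits sq]]].
have [in_ao | past_ao] := leqP (i + 2 * k) (size a + size o).
  have fits_k : i + k <= size (a ++ o) by rewrite size_cat; lia.
  have fits_2k : i + k + k <= size (a ++ o) by rewrite size_cat; lia.
  apply: irr_ao; apply/short_squareP; exists k, i.
  rewrite catA (factor_catl c fits_k) (factor_catl c fits_2k) in sq.
  by split=> //; rewrite size_cat; lia.
(* A square reaching into c is short, so it must start inside o. *)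
have [j def_i] : exists j, i = size a + j by exists (i - size a); lia.
rewrite {}def_i in sq fits past_ao.
apply: irr_oc; apply/short_squareP; exists k, j.
rewrite -[size a + j + k]addnA !factor_catr in sq.
by rewrite !size_cat in fits *; split=> //; lia.
Qed.

End ShortSquares.

Section JoinWith.
Variables (T : eqType) (sep : seq T).

Lemma join_with_cons2 (B B' : seq T) (Bs : seq (seq T)) :
  join_with sep [:: B, B' & Bs] = B ++ sep ++ join_with sep (B' :: Bs).
Proof. by []. Qed.

Lemma irreducible_framed_join (B : seq T) (Bs : seq (seq T)) :
  5 <= size sep ->
  (forall X, X \in B :: Bs -> irreducible (sep ++ X ++ sep)) ->
  irreducible (sep ++ join_with sep (B :: Bs) ++ sep).
Proof.
move=> sep_ge5; elim: Bs B => [|B' Bs IH] B framed.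
  by apply: framed; rewrite mem_head.
have -> : sep ++ join_with sep [:: B, B' & Bs] ++ sep
        = (sep ++ B) ++ sep ++ (join_with sep (B' :: Bs) ++ sep).
  by rewrite join_with_cons2 -!catA.
apply: irreducible_glue => //.
  by rewrite -catA; apply: framed; rewrite mem_head.
by apply: IH => X X_in; apply: framed; rewrite inE X_in orbT.
Qed.

(* Joining n + 1 blocks of length m uses n separators. *)
Lemma size_join_with (m : nat) (B : seq T) (Bs : seq (seq T)) :
  (forall X, X \in B :: Bs -> size X = m) ->
  size (join_with sep (B :: Bs)) + size sep = (size Bs).+1 * (m + size sep).
Proof.
elim: Bs B => [|B' Bs IH] B sizes.
  by rewrite /= sizes ?mem_head // mul1n.
have IH' : size (join_with sep (B' :: Bs)) + size sep = (size Bs).+1 * (m + size sep).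
  by apply: IH => X X_in; apply: sizes; rewrite inE X_in orbT.
rewrite join_with_cons2 !size_cat sizes ?mem_head // [size (_ :: Bs)]/= mulSn.
lia.
Qed.

End JoinWith.

Theorem lemma3 (q l m N : nat) (sigma : seq 'I_q) (Bs : seq (seq 'I_q)) :
  3 <= q -> 5 <= l -> l < m -> 0 < N ->
  ir l sigma ->
  size Bs = N ->
  (forall B, B \in Bs -> size B = m) ->
  (forall B, B \in Bs -> ir (m + 2 * l) (sigma ++ B ++ sigma)) ->
  ir (N * (m + l) - l) (join_with sigma Bs).
Proof.
move=> _ l_ge5 _ N_gt0 /andP[/eqP size_sigma _] size_Bs sizes framed.
case: Bs size_Bs sizes framed => [|B Bs size_Bs sizes framed].
  by move=> size_Bs; rewrite -size_Bs in N_gt0.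
apply/andP; split.
  by rewrite -size_Bs -size_sigma -(size_join_with sigma sizes) addnK.
apply: (@irreducible_infix _ sigma _ sigma).
apply: irreducible_framed_join; first by rewrite size_sigma.
by move=> X /framed /andP[].
Qed.
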